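(* Let $\chi \in \mathbb{F}_{p^2}^\times$ such that $|\chi| \not\in \{1, 2\}$ and $|\chi| \in \mathcal{D}(p \pm 1)$. Then exactly one of $\iota_{p \pm 1}(\chi)$ or $\iota_{p \pm 1}(\chi^{-1})$ is in the lower half.
   Context: Let $p$ be an odd prime; $|\cdot|$ denotes multiplicative order in $\mathbb{F}_{p^2}^\times$, $\mathcal{D}(n)$ is the set of positive divisors of $n$, and $\mathcal{D}(p \pm 1) = \mathcal{D}(p-1) \cup \mathcal{D}(p+1)$. Write $p - 1 = p_1^{t_1} \cdots p_n^{t_n}$ with $p_1 = 2$. Fix a $\mathbb{Z}$-basis $\{g_i\}_{i=1}^n$ of $\mathbb{F}_p^\times$ with $|g_i| = p_i^{t_i}$; this gives a group isomorphism $\iota_{p-1} : \mathbb{F}_p^\times \to \bigoplus_{i=1}^n \mathbb{Z}/p_i^{t_i}\mathbb{Z}$, $\prod_{i} g_i^{r_i} \mapsto (r_1, \ldots, r_n)$. The identical construction, with $p+1 = q_1^{s_1}\cdots q_m^{s_m}$ ($q_1 = 2$) and the subgroup $E \subset \mathbb{F}_{p^2}^\times$ of order $p+1$ in place of $\mathbb{F}_p^\times$, gives $\iota_{p+1} : E \to \bigoplus_i \mathbb{Z}/q_i^{s_i}\mathbb{Z}$; $\iota_{p\pm1}$ means $\iota_{p-1}$ when $\chi \in \mathbb{F}_p^\times$ and $\iota_{p+1}$ when $\chi \in E$. Definition (lower half): with $p \pm 1 = p_1^{t_1}\cdots p_n^{t_n}$, $p_1 = 2$, let $(r_1, \ldots,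 r_n) \in \bigoplus_{i} \mathbb{Z}/p_i^{t_i}\mathbb{Z}$ be an integer array (via the isomorphism above) not representing an element of order $1$ or $2$, and let $k = \min\{j : r_j \neq 0 \text{ and } (p_j, r_j) \neq (2, 2^{t_1 - 1})\}$. The array is in the lower half if $r_k \leq p_k^{t_k}/2$. *)

From HB Require Import structures.
From mathcomp Require Import all_boot all_order all_algebra all_fingroup.
Set Implicit Arguments. Unset Strict Implicit. Unset Printing Implicit Defensive.
Import GRing.Theory.

(* The units of the prime subfield F_p of a finite field F of characteristic p,
   viewed inside the unit group F^x = {unit F}. *)
Definition Fp_units (F : finFieldType) (p : nat) : {set {unit F}} :=
  [set u : {unit F} | [exists m : 'I_p, val u == (m%:R : F)%R]].

Definition coords (gT : finGroupType) (n : nat) (ps ts : 'I_n.+1 -> nat)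
  (gs : 'I_n.+1 -> gT) (r : {ffun 'I_n.+1 -> nat}) (x : gT) : Prop :=
  (forall i, r i < ps i ^ ts i) /\ x = (\prod_(i < n.+1) gs i ^+ r i)%g.

Definition ZBasis (gT : finGroupType) (H : {set gT}) (N n : nat)
  (ps ts : 'I_n.+1 -> nat) (gs : 'I_n.+1 -> gT) : Prop :=
  [/\ (forall i, prime (ps i)) /\ injective ps, ps ord0 = 2,
      (forall i, 0 < ts i) /\
      N = (\prod_(i < n.+1) ps i ^ ts i),
      (forall i, gs i \in H /\ #[gs i]%g = ps i ^ ts i) &
      (forall x, x \in H -> exists! r, coords ps ts gs r x)].

Definition qualifies (n : nat) (ps ts : 'I_n.+1 -> nat)
  (r : {ffun 'I_n.+1 -> nat}) (j : 'I_n.+1) : bool :=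
  (r j != 0) && ((ps j, r j) != (2, 2 ^ (ts ord0).-1)).

(* lower half: with k the least qualifying index, r_k <= p_k^{t_k}/2
   (written 2 * r_k <= p_k^{t_k} to avoid truncating division). *)
Definition lower_half (n : nat) (ps ts : 'I_n.+1 -> nat)
  (r : {ffun 'I_n.+1 -> nat}) : bool :=
  [exists k : 'I_n.+1,
     [&& qualifies ps ts r k,
         [forall j : 'I_n.+1, (j < k)%N ==> ~~ qualifies ps ts r j] &
         2 * r k <= ps k ^ ts k]].

From mathcomp Require Import all_boot all_order all_algebra all_fingroup all_solvable all_field.
From mathcomp Require Import zify.
Set Implicit Arguments. Unset Strict Implicit. Unset Printing Implicit Defensive.
Import GRing.Theory.

(* Inverting an element negates its coordinates modulo each p_i^{t_i}.  This
   preserves the set of qualifying indices and replaces r_k by p_k^{t_k} - r_k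
   at the least one, k.  As 2 r_k <> p_k^{t_k} (the modulus is odd for p_k <> 2,
   and r_k <> 2^{t_1 - 1} otherwise), exactly one of r_k and p_k^{t_k} - r_k is
   at most half the modulus.  Some index qualifies, for otherwise chi^2 = 1.
   Finally chi lies in F_p^x or in E by root counting: these already supply
   all the roots of X^p - X, resp. X^{p+1} - 1. *)

Definition coord_opp n (ps ts : 'I_n.+1 -> nat) (r : {ffun 'I_n.+1 -> nat}) :
    {ffun 'I_n.+1 -> nat} :=
  [ffun i => (ps i ^ ts i - r i) %% (ps i ^ ts i)].

Lemma modn_opp_eq m a b : a < m -> b < m -> (a + b) %% m = 0 -> b = (m - a) %% m.
Proof.
move=> am bm /eqP; rewrite -/(m %| a + b) => /dvdnP[k sum_ab].
have k_lt2 : k < 2 by rewrite ltnNge; apply/negP => k2; have := leq_mul k2 (leqnn m); lia.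
by case: k k_lt2 sum_ab => [|[|]] // _ sum_ab; case: (posnP a) => [a0|a_gt0];
  rewrite ?a0 ?subn0 ?modnn ?modn_small; lia.
Qed.

Lemma lower_halfE n (ps ts : 'I_n.+1 -> nat) r k :
    qualifies ps ts r k -> (forall j, qualifies ps ts r j -> k <= j) ->
  lower_half ps ts r = (2 * r k <= ps k ^ ts k).
Proof.
move=> qk kmin; apply/existsP/idP => [[k' /and3P[qk' /forallP k'min le]] | le].
  suff -> : k = k' by [].
  apply/val_inj/eqP; rewrite eqn_leq kmin //=.
  by apply: contraT; rewrite -ltnNge => lt; have := k'min k; rewrite lt qk.
exists k; rewrite qk le andbT /=; apply/forallP => j; apply/implyP => jk.
by apply: contraTN jk => /kmin; rewrite -leqNgt.
Qed.

Section CoordinateArrays.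
Variables (n : nat) (ps ts : 'I_n.+1 -> nat).
Hypotheses (ps_prime : forall i, prime (ps i)) (ps_inj : injective ps).
Hypotheses (ps0 : ps ord0 = 2) (ts0_gt0 : 0 < ts ord0).

Local Notation modulus i := (ps i ^ ts i).
Local Notation c := (2 ^ (ts ord0).-1).

Lemma ps_eq2 j : ps j = 2 -> j = ord0.
Proof. by rewrite -ps0 => /ps_inj. Qed.

Lemma modulus0 : modulus ord0 = 2 * c.
Proof. by rewrite ps0 -expnS prednK. Qed.

Lemma odd_modulus j : j != ord0 -> odd (modulus j).
Proof.
move=> j0; rewrite oddX orbC; case: (even_prime (ps_prime j)) => [/ps_eq2 ej|->//].
by rewrite ej eqxx in j0.
Qed.

Lemma coord_oppE (r : {ffun 'I_n.+1 -> nat}) i : r i < modulus i ->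
  coord_opp ps ts r i = if r i == 0 then 0 else modulus i - r i.
Proof.
rewrite ffunE; case: eqP => [->|r0 lt]; first by rewrite subn0 modnn.
by rewrite modn_small; lia.
Qed.

Lemma qualifies_opp (r : {ffun 'I_n.+1 -> nat}) : (forall i, r i < modulus i) ->
  qualifies ps ts (coord_opp ps ts r) =1 qualifies ps ts r.
Proof.
move=> r_lt j; rewrite /qualifies coord_oppE // !xpair_eqE; have := r_lt j.
case: (eqVneq (ps j) 2) => [/ps_eq2 -> | pj2]; rewrite ?modulus0;
  case: (r _ =P 0) => [-> //|r0] /= lt; apply/eqP; lia.
Qed.

Lemma double_coord_neq_modulus (r : {ffun 'I_n.+1 -> nat}) k :
  qualifies ps ts r k -> 2 * r k != modulus k.
Proof.
case/andP=> _; case: (eqVneq k ord0) => [-> | k0].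
  by rewrite modulus0 ps0 xpair_eqE eqxx /= eqn_pmul2l.
by move=> _; apply: contraTneq (odd_modulus k0) => <-; rewrite oddM.
Qed.

Lemma lower_half_opp (r : {ffun 'I_n.+1 -> nat}) : (forall i, r i < modulus i) ->
    (exists k, qualifies ps ts r k) ->
  lower_half ps ts r (+) lower_half ps ts (coord_opp ps ts r).
Proof.
move=> r_lt [j qj]; have [k qk kmin] := arg_minnP (fun i : 'I_n.+1 => val i) qj.
have qk' : qualifies ps ts (coord_opp ps ts r) k by rewrite qualifies_opp.
rewrite (lower_halfE qk kmin) (lower_halfE qk') => [|i]; last first.
  by rewrite qualifies_opp //; apply: kmin.
have rk0 : r k != 0 by case/andP: qk.
rewrite coord_oppE // (negbTE rk0).
by have := double_coord_neq_modulus qk; have := r_lt k; lia.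
Qed.

End CoordinateArrays.

Section UnitCoordinates.
Variables (R : finComUnitRingType) (n : nat) (ps ts : 'I_n.+1 -> nat).
Variable gs : 'I_n.+1 -> {unit R}.
Hypothesis gs_order : forall i, #[gs i]%g = ps i ^ ts i.

Local Notation coords := (coords ps ts gs).

Lemma val_prod_expg (r : 'I_n.+1 -> nat) :
  val (\prod_i gs i ^+ r i)%g = (\prod_i val (gs i) ^+ r i)%R.
Proof.
rewrite (big_morph val (@FinRing.val_unitM _) (@FinRing.val_unit1 _)).
by apply: eq_bigr => i _; rewrite FinRing.val_unitX.
Qed.

Lemma coords1 : coords [ffun => 0] 1%g.
Proof.
split=> [i|]; first by rewrite ffunE -gs_order order_gt0.
by rewrite big1 // => i _; rewrite ffunE expg0.
Qed.

Lemma coords_mulg r s x y : coords r x -> coords s y ->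
  coords [ffun i => (r i + s i) %% (ps i ^ ts i)] (x * y)%g.
Proof.
move=> [_ ->] [_ ->]; split=> [i|]; first by rewrite ffunE ltn_mod -gs_order order_gt0.
apply: val_inj; rewrite FinRing.val_unitM !val_prod_expg -big_split /=.
by apply: eq_bigr => i _; rewrite ffunE -!FinRing.val_unitX -FinRing.val_unitM -expgD
  -gs_order expg_mod_order.
Qed.

Lemma expg2_eq1_unqualified r x : injective ps -> ps ord0 = 2 -> 0 < ts ord0 ->
  (forall i, ~~ qualifies ps ts r i) -> coords r x -> (x ^+ 2 = 1)%g.
Proof.
move=> ps_inj ps0 ts0_gt0 no_qual [_ ->]; apply: val_inj.
rewrite FinRing.val_unitX val_prod_expg -prodrXl FinRing.val_unit1.
apply: big1 => i _; rewrite -exprM -FinRing.val_unitX; apply/eqP.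
rewrite -(FinRing.val_unit1 R) val_eqE -order_dvdn gs_order.
move: (no_qual i); rewrite negb_and !negbK xpair_eqE => /orP[/eqP -> //|].
case/andP=> /eqP/(ps_eq2 ps_inj ps0) -> /eqP ->.
by rewrite (modulus0 ps0 ts0_gt0) mulnC.
Qed.

End UnitCoordinates.

Lemma lower_half_xor_invg (R : finComUnitRingType) (H : {set {unit R}}) N n
    (ps ts : 'I_n.+1 -> nat) gs (x : {unit R}) r r' :
    1%g \in H -> ZBasis H N ps ts gs -> (x ^+ 2 != 1)%g ->
    coords ps ts gs r x -> coords ps ts gs r' x^-1%g ->
  lower_half ps ts r (+) lower_half ps ts r'.
Proof.
move=> H1 [[ps_prime ps_inj] ps0 [ts_gt0 _] gsH coordsH] x2 cx cx'.
have gs_order i : #[gs i]%g = ps i ^ ts i by case: (gsH i).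
have [[r_lt _] [r'_lt _]] := (cx, cx').
have r'E : r' = coord_opp ps ts r.
  have [r0 [_ r0_uniq]] := coordsH _ H1.
  have := coords_mulg gs_order cx cx'; rewrite mulgV => /r0_uniq.
  rewrite (r0_uniq _ (coords1 gs_order)) => /ffunP sum0.
  apply/ffunP => i; rewrite ffunE; apply: modn_opp_eq; [exact: r_lt | exact: r'_lt |].
  by have := sum0 i; rewrite !ffunE.
rewrite r'E lower_half_opp //.
case: (pickP (qualifies ps ts r)) => [k qk | no_qual]; first by exists k.
have no_qual' i : ~~ qualifies ps ts r i by rewrite no_qual.
have x2_eq1 := expg2_eq1_unqualified gs_order ps_inj ps0 (ts_gt0 _) no_qual' cx.
by rewrite x2_eq1 eqxx in x2.
Qed.

Lemma max_roots_mem (R : idomainType) (P : {poly R}) (s : seq R) x :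
    (P != 0)%R -> uniq s -> all (root P) s -> (size P).-1 <= size s ->
  root P x -> x \in s.
Proof.
move=> P0 s_uniq s_roots size_s Px; apply: contraT => xs.
have := max_poly_roots P0 (_ : all (root P) (x :: s)); rewrite /= Px s_roots xs s_uniq.
move=> /(_ isT isT); rewrite ltnNge -(prednK (_ : 0 < size P)) ?lt0n ?size_poly_eq0 //.
by rewrite ltnS size_s.
Qed.

Lemma natr_inj_lt_pchar (R : nzRingType) p i j :
  p \in [pchar R]%R -> i < p -> j < p -> (i%:R = j%:R :> R)%R -> i = j.
Proof.
move=> pcharR; wlog ij : i j / i <= j => [W ip jp eij | ip jp eij].
  by case/orP: (leq_total i j) => /W; [apply | move=> /(_ jp ip (esym eij))].
have /dvdn_leq p_le : p %| j - i by rewrite (dvdn_pcharf pcharR) natrB // eij subrr.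
by move: ij; case: (posnP (j - i)) => [|/p_le]; lia.
Qed.

Lemma Fp_units_expg (F : finFieldType) p (u : {unit F}) :
  prime p -> p \in [pchar F]%R -> (u ^+ p.-1 = 1)%g -> u \in Fp_units F p.
Proof.
move=> p_prime pcharF up1.
have p_gt0 := prime_gt0 p_prime.
pose P : {poly F} := ('X^p - 'X)%R.
have sizeP : size P = p.+1.
  by rewrite /P size_polyDl ?size_polyXn // size_polyN size_polyX ltnS prime_gt1.
have /mapP[i] : val u \in [seq (i%:R)%R : F | i <- iota 0 p].
  apply: (@max_roots_mem _ P); rewrite ?size_map ?size_iota ?sizeP //.
  - by rewrite -size_poly_eq0 sizeP.
  - rewrite map_inj_in_uniq ?iota_uniq // => i j; rewrite !mem_iota !add0n.
    by move=> /andP[_ ip] /andP[_ jp]; apply: natr_inj_lt_pchar pcharF ip jp.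
  - apply/allP => _ /mapP[i _ ->]; rewrite /root !hornerE subr_eq0.
    by rewrite -(pFrobenius_autE pcharF) pFrobenius_aut_nat.
  rewrite /root /P !hornerE subr_eq0 -{1}(prednK p_gt0) exprS.
  by rewrite -FinRing.val_unitX up1 FinRing.val_unit1 mulr1.
rewrite mem_iota add0n => /andP[_ ip] ui; rewrite inE; apply/existsP.
by exists (Ordinal ip); rewrite ui.
Qed.

Lemma mem_group_expg_card (F : finFieldType) (E : {group {unit F}}) (u : {unit F}) :
  (u ^+ #|E| = 1)%g -> u \in E.
Proof.
move=> uE; pose P : {poly F} := ('X^#|E| - 1%:P)%R.
have sizeP : size P = #|E|.+1 by rewrite /P size_XnsubC ?cardG_gt0.
have : val u \in [seq val v | v <- enum E].
  apply: (@max_roots_mem _ P); rewrite ?size_map -?cardE ?sizeP //.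
  - by rewrite -size_poly_eq0 sizeP.
  - by rewrite (map_inj_uniq val_inj) enum_uniq.
  - apply/allP => _ /mapP[v vE ->]; rewrite /root !hornerE subr_eq0.
    by rewrite -FinRing.val_unitX expg_cardG ?FinRing.val_unit1 // -mem_enum.
  by rewrite /root !hornerE subr_eq0 -FinRing.val_unitX uE FinRing.val_unit1.
by rewrite (mem_map val_inj) mem_enum.
Qed.

Theorem lemma9 (p : nat) (F : finFieldType) (E : {group {unit F}})
  (chi : {unit F})
  (hp : prime p) (hodd : odd p) (hF : #|F| = p ^ 2) (hE : #|E| = p.+1)
  (h1 : #[chi]%g != 1) (h2 : #[chi]%g != 2)
  (hD : (#[chi]%g %| p.-1) || (#[chi]%g %| p.+1)) :
  (chi \in Fp_units F p \/ chi \in E) /\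
  (chi \in Fp_units F p ->
     forall n (ps ts : 'I_n.+1 -> nat) (gs : 'I_n.+1 -> {unit F}),
     ZBasis (Fp_units F p) p.-1 ps ts gs ->
     forall r r', coords ps ts gs r chi -> coords ps ts gs r' (chi^-1)%g ->
     lower_half ps ts r (+) lower_half ps ts r') /\
  (chi \in E ->
     forall n (ps ts : 'I_n.+1 -> nat) (gs : 'I_n.+1 -> {unit F}),
     ZBasis E p.+1 ps ts gs ->
     forall r r', coords ps ts gs r chi -> coords ps ts gs r' (chi^-1)%g ->
     lower_half ps ts r (+) lower_half ps ts r').
Proof.
have pcharF := card_finPcharP hF hp.
have chi2 : (chi ^+ 2 != 1)%g.
  rewrite -order_dvdn; have /primeP[_ div2] : prime 2 by [].
  by apply/negP => /div2; rewrite (negbTE h1) (negbTE h2).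
have Fp1 : 1%g \in Fp_units F p.
  by rewrite inE; apply/existsP; exists (Ordinal (prime_gt1 hp)).
split; last by split=> _ n ps ts gs B r r'; apply: lower_half_xor_invg B chi2.
case/orP: hD; rewrite order_dvdn => /eqP chi_exp; first by left; exact: Fp_units_expg.
by right; apply: mem_group_expg_card; rewrite hE.
Qed.
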